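(* For every $m \in \mathbb{N}$, the $m$-uniform hypergraph $\mathcal{H}_m = (V, \mathcal{E}_s \cup \mathcal{E}_p)$ defined below admits a realization with bottomless rectangles and horizontal strips: there is an injective map $\pi\colon V \to \mathbb{R}^2$ such that for every hyperedge $E$ of $\mathcal{H}_m$ there is a range $R \in \mathcal{R}_{\rm BL} \cup \mathcal{R}_{\rm HS}$ with $\pi(V) \cap R = \pi(E)$.
   Context: Construction of $\mathcal{H}_m$: first a rooted forest $F_m$ with $m^m$ trees is built, whose vertices are partitioned into ''stages''; each stage $S$ carries a total order $<_S$, and all vertices of a stage have the same distance $j$ (the level of $S$) to the root of their tree; a stage on level $j \in \{0,\dots,m-1\}$ has $m^{m-j}$ vertices. Start with $m^m$ roots, which form the unique stage on level $0$, ordered in an arbitrary fixed way. Then, for every already defined stage $S$ on level $j < m-1$ and every subset $S' \subseteq S$ with $|S'| = m^{m-j-1}$, add a new stage $T(S')$ on level $j+1$ consisting of $m^{m-j-1}$ new vertices such that every vertex of $S'$ gets exactly one child from $T(S')$, and order $T(S')$ by $<_{T(S')}$ as their parents are ordered by $<_S$. $\mathcal{H}_m$ has vertex set $V = V(F_m)$; its hyperedges are the stage-hyperedges $\mathcal{E}_s$ (for every stage $S$, each set of $m$ consecutive vertices in $<_S$) and the path-hyperedges $\mathcal{E}_p$ (the vertex set of every root-to-leaf path in $F_m$). Bottomless rectangles: $\mathcal{R}_{\rm BL} = \{\{(x,y) : a_1 \leq x \leq a_2,\ y \leq b\} : a_1,a_2,b \in \mathbb{R}\}$; horizontal strips: $\mathcal{R}_{\rm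 HS} = \{\{(x,y) : b_1 \leq y \leq b_2\} : b_1,b_2 \in \mathbb{R}\}$. *)

From Stdlib Require Import Reals.
From mathcomp Require Import all_boot.

Set Implicit Arguments.
Unset Strict Implicit.
Unset Printing Implicit Defensive.

(* A stage on level j is encoded by its construction history           *)
(*   As = [:: A_j; A_{j-1}; ...; A_1]   (most recent choice first),      *)
(* where A_{i+1} is the chosen subset S' of the stage on level i,        *)
(* given as the strictly increasing list of positions (w.r.t. the order *)
(* of that stage) of the chosen vertices.  The root stage is [::] and    *)
(* its m^m vertices are ordered by position 0 < 1 < ... < m^m - 1.      *)
(* A vertex is a pair (As, p): the vertex at position p of stage As;    *)
(* the order <_S of a stage is the order of positions.                  *)

Definition stage_size (m j : nat) : nat := m ^ (m - j).

Fixpoint valid_stage (m : nat) (As : seq (seq nat)) : bool :=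
  match As with
  | [::] => true
  | A :: rest =>
      [&& valid_stage m rest,
          (size rest).+1 <= m.-1,
          sorted ltn A,
          all (fun x => x < stage_size m (size rest)) A
        & size A == stage_size m (size rest).+1]
  end.

Definition raw_vertex := (seq (seq nat) * nat)%type.

Definition valid_vertex (m : nat) (v : raw_vertex) : bool :=
  valid_stage m v.1 && (v.2 < stage_size m (size v.1)).

Definition vertex (m : nat) := {v : raw_vertex | valid_vertex m v}.

Definition vstage (m : nat) (v : vertex m) : seq (seq nat) := (proj1_sig v).1.
Definition vpos (m : nat) (v : vertex m) : nat := (proj1_sig v).2.

(* Parent in F_m: the vertex at position p of stage T(S') (S' encoded by *)
(* A) is the child of the p-th vertex of S' (in the order of S), which   *)
(* sits at position nth 0 A p of the parent stage.                       *)
Definition parent (v : raw_vertex) : option raw_vertex :=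
  match v.1 with
  | [::] => None
  | A :: rest => Some (rest, nth 0 A v.2)
  end.

Definition anc_or_self (m : nat) (u w : vertex m) : Prop :=
  exists k : nat, iter k (fun o => obind parent o) (Some (proj1_sig w))
                  = Some (proj1_sig u).

Definition is_leaf (m : nat) (l : vertex m) : Prop :=
  ~ exists w : vertex m, parent (proj1_sig w) = Some (proj1_sig l).

Definition stage_hyperedge (m : nat) (E : vertex m -> Prop) : Prop :=
  exists (As : seq (seq nat)) (k : nat),
    valid_stage m As /\ k + m <= stage_size m (size As) /\
    forall v : vertex m, E v <-> (vstage v = As /\ k <= vpos v < k + m).

Definition path_hyperedge (m : nat) (E : vertex m -> Prop) : Prop :=
  exists l : vertex m, is_leaf l /\
    forall v : vertex m, E v <-> anc_or_self v l.

Definition hyperedge (m : nat) (E : vertex m -> Prop) : Prop :=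
  stage_hyperedge E \/ path_hyperedge E.

Definition point := (R * R)%type.

Definition in_bottomless (a1 a2 b : R) (q : point) : Prop :=
  Rle a1 (fst q) /\ Rle (fst q) a2 /\ Rle (snd q) b.

Definition in_hstrip (b1 b2 : R) (q : point) : Prop :=
  Rle b1 (snd q) /\ Rle (snd q) b2.

Definition is_BL_or_HS_range (Rg : point -> Prop) : Prop :=
  (exists a1 a2 b : R, forall q, Rg q <-> in_bottomless a1 a2 b q) \/
  (exists b1 b2 : R, forall q, Rg q <-> in_hstrip b1 b2 q).

From Stdlib Require Import Reals Lra.
From mathcomp Require Import all_boot zify.

(* Identify a stage with its history, the sequence of subsets chosen from the
   root stage down to it, and give every subset a positive label.  A vertex gets
   as height the labels of its history, read root first as one numeral,
   followed by its position in the stage: each stage fills a block of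
   consecutive heights in its own order, so stage-hyperedges are cut out by
   horizontal strips.  Its abscissa is the position of its root followed by the
   history with complemented labels.  Histories of ancestors are prefixes, so a
   root-to-leaf path lies in the bottomless rectangle spanned by the abscissae
   of its root and leaf and the height of the leaf.  Conversely, a vertex in
   that rectangle lies in the tree of the leaf; if its history branches off the
   leaf's, the complemented labels put it right of the leaf or the labels put it
   above; if its history extends the leaf's, the leaf would have a child. *)

Set Implicit Arguments.
Unset Strict Implicit.
Unset Printing Implicit Defensive.

Lemma seq_prefix_or_diverge (T : eqType) (s t : seq T) :
  [\/ s = t, exists a u, t = s ++ a :: u, exists a u, s = t ++ a :: u
    | exists c a b s' t', [/\ a != b, s = c ++ a :: s' & t = c ++ b :: t']].
Proof.
elim: s t => [|a s IH] [|b t]; first by constructor 1.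
- by constructor 2; exists b, t.
- by constructor 3; exists a, s.
case: (eqVneq a b) => [<-|ab]; last by constructor 4; exists [::], a, b, s, t.
case: (IH t) => [->|[x [u ->]]|[x [u ->]]|[c [x [y [s' [t' [xy -> ->]]]]]]].
- by constructor 1.
- by constructor 2; exists x, u.
- by constructor 3; exists x, u.
- by constructor 4; exists (a :: c), x, y, s', t'.
Qed.

Section DigitEncoding.
Variable D : nat.

(* [s] padded with zeros to [n] digits, read in base [D]; this makes [enc n]
   monotone for the lexicographic order. *)
Fixpoint enc (n : nat) (s : seq nat) : nat :=
  if n is n'.+1 then head 0 s * D ^ n' + enc n' (behead s) else 0.

Lemma enc_nil n : enc n [::] = 0.
Proof. by elim: n => //= n ->; rewrite mul0n. Qed.

Lemma enc_cat n c s :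
  size c <= n -> enc n (c ++ s) = enc n c + enc (n - size c) s.
Proof.
elim: c n => [|a c IH] [|n] //= => [_|sz]; first by rewrite enc_nil mul0n.
by rewrite IH // addnA subSS.
Qed.

Lemma enc_prefix_leq n c s : size c <= n -> enc n c <= enc n (c ++ s).
Proof. by move=> sz; rewrite enc_cat // leq_addr. Qed.

Hypothesis D_gt0 : 0 < D.

Lemma enc_ltn_exp n s : all (fun x => x < D) s -> size s <= n -> enc n s < D ^ n.
Proof.
elim: n s => [|n IH] [|a s] //= => [_ _|/andP[aD sD] sz].
  by rewrite enc_nil mul0n add0n expn_gt0 D_gt0.
have := IH s sD sz; rewrite expnS; nia.
Qed.

Lemma enc_prefix_ltn n c a s :
  0 < a -> size (c ++ a :: s) <= n -> enc n c < enc n (c ++ a :: s).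
Proof.
move=> a_gt0; rewrite size_cat /= => sz; rewrite enc_cat; last lia.
have [k ->] : exists k, n - size c = k.+1 by exists (n - size c).-1; lia.
have := expn_gt0 D k; rewrite D_gt0 /=; nia.
Qed.

Lemma enc_ltn_lex n c a b s t :
  a < b -> all (fun x => x < D) (c ++ a :: s) ->
  size (c ++ a :: s) <= n -> size (c ++ b :: t) <= n ->
  enc n (c ++ a :: s) < enc n (c ++ b :: t).
Proof.
rewrite all_cat size_cat /= => ab /and3P[_ _ sD] sz1 _.
rewrite !enc_cat ?ltn_add2l; try lia.
have [k kE] : exists k, n - size c = k.+1 by exists (n - size c).-1; lia.
rewrite kE /=; have : enc k s < D ^ k by apply: enc_ltn_exp => //; lia.
nia.
Qed.

Lemma enc_inj n s t :
  all (fun x => 0 < x < D) s -> all (fun x => 0 < x < D) t ->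
  size s <= n -> size t <= n -> enc n s = enc n t -> s = t.
Proof.
have digits u : all (fun x => 0 < x < D) u -> all (fun x => x < D) u.
  by apply: sub_all => x /andP[].
move=> sD tD ss st.
case: (seq_prefix_or_diverge s t) => [//|[a [u tE]]|[a [u sE]]|].
- move: tD; rewrite tE all_cat /= => /and3P[_ /andP[a_gt0 _] _].
  have := enc_prefix_ltn a_gt0 (n := n) (c := s) (s := u).
  by rewrite -tE => /(_ st)/ltn_eqF/eqP.
- move: sD; rewrite sE all_cat /= => /and3P[_ /andP[a_gt0 _] _].
  have := enc_prefix_ltn a_gt0 (n := n) (c := t) (s := u).
  by rewrite -sE => /(_ ss)/ltn_eqF/eqP/nesym.
move=> [c [a [b [s' [t' [ab sE tE]]]]]]; move/digits: sD; move/digits: tD.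
rewrite {}sE {}tE in ss st * => tD sD.
case: (ltngtP a b) => [lab|lba|eab]; last by rewrite eab eqxx in ab.
- by move/eqP; rewrite ltn_eqF // enc_ltn_lex.
- by move/eqP; rewrite gtn_eqF // enc_ltn_lex.
Qed.

End DigitEncoding.

Lemma INR_leq a b : Rle (INR a) (INR b) <-> a <= b.
Proof. by split => [/INR_le/leP | /leP/le_INR]. Qed.

Lemma INR_ltn a b : Rle (INR a) (Rminus (INR b) 1) <-> a < b.
Proof.
case: b => [|b]; first by split => // lt; have := pos_INR a; rewrite /= in lt; lra.
by rewrite S_INR (_ : Rminus (Rplus (INR b) 1) 1 = INR b) ?INR_leq //; ring.
Qed.

Lemma in_hstrip_INR lo hi x y :
  in_hstrip (INR lo) (Rminus (INR hi) 1) (x, INR y) <-> lo <= y < hi.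
Proof. by rewrite /in_hstrip /= INR_leq INR_ltn; split => [[-> ->] | /andP[]]. Qed.

Lemma in_bottomless_INR a1 a2 b x y :
  in_bottomless (INR a1) (INR a2) (INR b) (INR x, INR y) <->
  [/\ a1 <= x, x <= a2 & y <= b].
Proof. by rewrite /in_bottomless /= !INR_leq; split => [[? []] | []]. Qed.

Definition cuts_out (T : Type) (pi : T -> point) (E : T -> Prop) :=
  exists Rg : point -> Prop, is_BL_or_HS_range Rg /\
    forall q, ((exists v, pi v = q) /\ Rg q) <-> (exists v, E v /\ pi v = q).

Lemma cuts_out_preimage (T : Type) (pi : T -> point) E Rg :
  is_BL_or_HS_range Rg -> (forall v, Rg (pi v) <-> E v) -> cuts_out pi E.
Proof.
move=> range_Rg HE; exists Rg; split => // q; split.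
- by case=> [[v <-] Rq]; exists v; split => //; apply/HE.
- by case=> v [Ev <-]; split; [exists v | apply/HE].
Qed.

Section Realization.
Variable m : nat.

Definition nroots := m ^ m.

Lemma stage_size_le j : stage_size m j <= nroots.
Proof.
rewrite /stage_size /nroots; case: m => [|k]; first by rewrite sub0n.
by rewrite leq_pexp2l // leq_subr.
Qed.

Definition bounded_subset (A : seq nat) :=
  all (fun x => x < nroots) A && (size A <= nroots).

Lemma valid_stage_bounded As : valid_stage m As -> all bounded_subset As.
Proof.
elim: As => //= A rest IH /and5P[v _ _ Alt /eqP sz]; rewrite IH // andbT.
rewrite /bounded_subset sz stage_size_le andbT.
by apply: sub_all Alt => x /leq_trans; apply; apply: stage_size_le.
Qed.

Lemma valid_stage_depth As : valid_stage m As -> size As <= m.-1.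
Proof. by case: As => //= A rest /and5P[]. Qed.

Definition subset_code (A : seq nat) := enc nroots.+1 nroots (map succn A).

Lemma subset_code_ltn A : bounded_subset A -> subset_code A < nroots.+1 ^ nroots.
Proof.
case/andP=> Alt sz; apply: enc_ltn_exp; rewrite ?size_map //.
by rewrite all_map; apply: sub_all Alt.
Qed.

Lemma subset_code_inj A B :
  bounded_subset A -> bounded_subset B -> subset_code A = subset_code B -> A = B.
Proof.
have digits C : all (fun x => x < nroots) C ->
    all (fun x => 0 < x < nroots.+1) (map succn C).
  by rewrite all_map; apply: sub_all.
case/andP=> Alt Asz /andP[Blt Bsz] /enc_inj.
rewrite !size_map => /(_ isT (digits _ Alt) (digits _ Blt) Asz Bsz).
exact/inj_map/succn_inj.
Qed.

(* Every label, every colabel and every root position is a digit in base [base]. *)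
Definition base := nroots.+1 ^ nroots + nroots + 1.
Definition label A := (subset_code A).+1.
Definition colabel A := base - label A.

Lemma label_bounds A : bounded_subset A -> 0 < label A < base.
Proof. by move/subset_code_ltn; rewrite /label /base; lia. Qed.

Lemma colabel_bounds A : bounded_subset A -> 0 < colabel A < base.
Proof. by move/label_bounds; rewrite /colabel; lia. Qed.

Lemma base_gt0 : 0 < base.
Proof. by rewrite /base addn1. Qed.

Lemma labels_inj As Bs :
  all bounded_subset As -> all bounded_subset Bs -> map label As = map label Bs -> As = Bs.
Proof.
elim: As Bs => [|A As IH] [|B Bs] //= /andP[A_ok As_ok] /andP[B_ok Bs_ok] [AB AsBs].
by rewrite (subset_code_inj A_ok B_ok AB) (IH Bs).
Qed.

Fixpoint root_pos (As : seq (seq nat)) (p : nat) : nat :=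
  if As is A :: rest then root_pos rest (nth 0 A p) else p.

(* Stage histories are read root first, hence the [rev]. *)
Definition stage_key (As : seq (seq nat)) := enc base m (map label (rev As)).

Definition ycoord (v : raw_vertex) := stage_key v.1 * nroots.+1 + v.2.

Definition xdigits (v : raw_vertex) := root_pos v.1 v.2 :: map colabel (rev v.1).

Definition xcoord (v : raw_vertex) := enc base m.+1 (xdigits v).

Definition ancestor (k : nat) (v : raw_vertex) := iter k (fun o => obind parent o) (Some v).

Lemma valid_vertex_stage v : valid_vertex m v -> valid_stage m v.1.
Proof. by case/andP. Qed.

Lemma valid_vertex_pos v : valid_vertex m v -> v.2 < nroots.+1.
Proof.
case/andP=> _ lt; apply: leq_trans lt _.
exact: leq_trans (stage_size_le _) (leqnSn _).
Qed.

Lemma valid_parent A rest p :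
  valid_vertex m (A :: rest, p) -> valid_vertex m (rest, nth 0 A p).
Proof.
rewrite /valid_vertex /= => /andP[/and5P[-> _ _ Alt /eqP sz] lt] /=.
by apply: (allP Alt); apply: mem_nth; rewrite sz.
Qed.

Lemma root_pos_ltn As p : valid_vertex m (As, p) -> root_pos As p < nroots.
Proof.
elim: As p => [|A rest IH] p /=; first by rewrite /valid_vertex /= /stage_size subn0.
by move/valid_parent/IH.
Qed.

Lemma root_pos_inj As p q :
  valid_vertex m (As, p) -> valid_vertex m (As, q) -> root_pos As p = root_pos As q -> p = q.
Proof.
elim: As p q => [|A rest IH] p q //= Vp Vq /(IH _ _ (valid_parent Vp) (valid_parent Vq)).
move: Vp Vq; rewrite /valid_vertex /= => /andP[/and5P[_ _ Asort _ /eqP sz] ltp] /andP[_ ltq].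
move/eqP; rewrite nth_uniq ?sz //; first by move/eqP.
by move: Asort; rewrite ltn_sorted_uniq_leq => /andP[].
Qed.

Lemma ancestorP k v w : valid_vertex m v -> ancestor k v = Some w ->
  [/\ k <= size v.1, w.1 = drop k v.1, root_pos w.1 w.2 = root_pos v.1 v.2
    & valid_vertex m w].
Proof.
move=> V; elim: k w => [|k IH] w /=; first by case=> <-; rewrite drop0.
rewrite -/(ancestor k v); case E: (ancestor k v) => [[[|A rest] q]|] //= [<-] /=.
have [_ uE ur U] := IH _ E; split; rewrite ?(valid_parent U) //=.
- by rewrite ltnNge; apply/negP => /drop_oversize; rewrite -uE.
- by rewrite -[k.+1]add1n -drop_drop -uE /= drop0.
Qed.

Lemma ancestor_exists k v :
  valid_vertex m v -> k <= size v.1 -> exists w, ancestor k v = Some w.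
Proof.
move=> V; elim: k => [|k IH] lt /=; first by exists v.
have [[[|A rest] q] E] := IH (ltnW lt); rewrite -/(ancestor k v) E /=.
  by have [_ /(congr1 size)] := ancestorP V E; rewrite size_drop /=; lia.
by exists (rest, nth 0 A q).
Qed.

Lemma ancestor_drop k v w : valid_vertex m v -> valid_vertex m w ->
  k <= size v.1 -> w.1 = drop k v.1 -> root_pos w.1 w.2 = root_pos v.1 v.2 ->
  ancestor k v = Some w.
Proof.
move=> V W k_le wE wr; have [[s p] E] := ancestor_exists V k_le.
have [_ /= uE ur U] := ancestorP V E; rewrite E.
case: w W wE wr => [s' q] /= W wE wr; subst s s'.
by rewrite (root_pos_inj U W (etrans ur (esym wr))).
Qed.

Lemma xdigits_size v : valid_vertex m v -> size (xdigits v) <= m.+1.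
Proof.
by move/valid_vertex_stage/valid_stage_depth; rewrite /= size_map size_rev; lia.
Qed.

Lemma xdigits_digits v : valid_vertex m v -> all (fun x => x < base) (xdigits v).
Proof.
case: v => As p V /=; apply/andP; split.
  by have := root_pos_ltn V; rewrite /base; lia.
rewrite all_map all_rev; apply: sub_all (valid_stage_bounded (valid_vertex_stage V)).
by move=> A /colabel_bounds /andP[].
Qed.

Lemma stage_labels_size As : valid_stage m As -> size (map label (rev As)) <= m.
Proof. by move/valid_stage_depth; rewrite size_map size_rev; lia. Qed.

Lemma stage_labels_digits As :
  valid_stage m As -> all (fun x => 0 < x < base) (map label (rev As)).
Proof.
move/valid_stage_bounded; rewrite all_map all_rev; apply: sub_all.
exact: label_bounds.
Qed.

Lemma xcoord_ltn_lex v w c a b s t : valid_vertex m v -> valid_vertex m w ->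
  xdigits v = c ++ a :: s -> xdigits w = c ++ b :: t -> a < b -> xcoord v < xcoord w.
Proof.
move=> V W vE wE ab; rewrite /xcoord vE wE; apply: enc_ltn_lex => //.
- exact: base_gt0.
- by rewrite -vE xdigits_digits.
- by rewrite -vE xdigits_size.
- by rewrite -wE xdigits_size.
Qed.

Lemma stage_key_ltn_lex As Bs c a b s t : valid_stage m As -> valid_stage m Bs ->
  map label (rev As) = c ++ a :: s -> map label (rev Bs) = c ++ b :: t -> a < b ->
  stage_key As < stage_key Bs.
Proof.
move=> VA VB AE BE ab; rewrite /stage_key AE BE; apply: enc_ltn_lex => //.
- exact: base_gt0.
- by rewrite -AE; apply: sub_all (stage_labels_digits VA) => x /andP[].
- by rewrite -AE stage_labels_size.
- by rewrite -BE stage_labels_size.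
Qed.

Lemma stage_key_ltn_ext pre As :
  valid_stage m (pre ++ As) -> pre != [::] -> stage_key As < stage_key (pre ++ As).
Proof.
move=> V pre_n0; have [A [u rE]] : exists A u, rev pre = A :: u.
  case rE: (rev pre) => [|A u]; last by exists A, u.
  by move: pre_n0; rewrite -[pre]revK rE.
have A_ok : bounded_subset A.
  by move: (valid_stage_bounded V); rewrite -all_rev rev_cat rE all_cat => /and3P[].
move: (stage_labels_size V); rewrite /stage_key rev_cat rE map_cat /= => sz.
apply: enc_prefix_ltn sz; first exact: base_gt0.
by case/andP: (label_bounds A_ok).
Qed.

Lemma stage_key_inj As Bs :
  valid_stage m As -> valid_stage m Bs -> stage_key As = stage_key Bs -> As = Bs.
Proof.
move=> VA VB /(enc_inj base_gt0 (stage_labels_digits VA) (stage_labels_digits VB)).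
move=> /(_ (stage_labels_size VA) (stage_labels_size VB)).
move/labels_inj; rewrite !all_rev => /(_ (valid_stage_bounded VA) (valid_stage_bounded VB)).
exact: (can_inj revK).
Qed.

Lemma ycoord_ltn v w :
  valid_vertex m v -> stage_key v.1 < stage_key w.1 -> ycoord v < ycoord w.
Proof. by move/valid_vertex_pos; rewrite /ycoord; nia. Qed.

Lemma ycoord_inj v w : valid_vertex m v -> valid_vertex m w -> ycoord v = ycoord w -> v = w.
Proof.
move=> V W yE; have key_eq : stage_key v.1 = stage_key w.1.
  case: (ltngtP (stage_key v.1) (stage_key w.1)) => // [/(ycoord_ltn V)|/(ycoord_ltn W)];
    by rewrite yE ltnn.
have sE := stage_key_inj (valid_vertex_stage V) (valid_vertex_stage W) key_eq.
case: v w {V W key_eq} yE sE => [s p] [s' q]; rewrite /ycoord /= => yE sE; subst s'.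
by move/addnI: yE => ->.
Qed.

Lemma ycoord_stage_window As k v :
  valid_stage m As -> k + m <= stage_size m (size As) -> valid_vertex m v ->
  stage_key As * nroots.+1 + k <= ycoord v < stage_key As * nroots.+1 + k + m <->
  v.1 = As /\ k <= v.2 < k + m.
Proof.
move=> VA km V; have vB := valid_vertex_pos V.
have kmB : k + m < nroots.+1 by have := stage_size_le (size As); lia.
rewrite /ycoord; split; last by case=> -> /andP[]; lia.
move=> /andP[lo hi]; have key_eq : stage_key v.1 = stage_key As.
  by case: (ltngtP (stage_key v.1) (stage_key As)) => // ?; exfalso; nia.
rewrite (stage_key_inj (valid_vertex_stage V) VA key_eq); split => //.
by move: lo hi; rewrite key_eq; lia.
Qed.

Lemma ancestor_in_window l k w : valid_vertex m l -> ancestor k l = Some w ->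
  [/\ xcoord ([::], root_pos l.1 l.2) <= xcoord w, xcoord w <= xcoord l
    & ycoord w <= ycoord l].
Proof.
move=> L E; have [_ wE wr W] := ancestorP L E.
have lE : l.1 = take k l.1 ++ w.1 by rewrite wE cat_take_drop.
have xl : xdigits l = xdigits w ++ map colabel (rev (take k l.1)).
  by rewrite /xdigits wr cat_cons -map_cat -rev_cat -lE.
split.
- by rewrite /xcoord /xdigits -wr; apply: (enc_prefix_leq _ (c := [:: _])).
- by rewrite /xcoord xl enc_prefix_leq // xdigits_size.
have [pre0|pre_n0] := eqVneq (take k l.1) [::].
  move: lE; rewrite pre0 /= => lE; rewrite lE in wr.
  case: l w L W lE wr {E wE xl pre0} => [s p] [s' q] /= L W lE; subst s.
  by move/(root_pos_inj W L) ->.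
have := stage_key_ltn_ext (pre := take k l.1) (As := w.1); rewrite -lE.
by move=> /(_ (valid_vertex_stage L) pre_n0) /(ycoord_ltn W) /ltnW.
Qed.

Lemma window_root_pos l v : valid_vertex m l -> valid_vertex m v ->
  xcoord ([::], root_pos l.1 l.2) <= xcoord v -> xcoord v <= xcoord l ->
  root_pos v.1 v.2 = root_pos l.1 l.2.
Proof.
move=> L V lo hi.
have Root : valid_vertex m ([::], root_pos l.1 l.2).
  by rewrite /valid_vertex /= /stage_size subn0; case: l L {lo hi} => s p /root_pos_ltn.
case: (ltngtP (root_pos v.1 v.2) (root_pos l.1 l.2)) => // [lt|gt]; exfalso.
- by have := xcoord_ltn_lex (c := [::]) V Root erefl erefl lt; lia.
- by have := xcoord_ltn_lex (c := [::]) L V erefl erefl gt; lia.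
Qed.

Lemma stage_extension_has_child l v pre A : valid_vertex m l -> valid_vertex m v ->
  root_pos v.1 v.2 = root_pos l.1 l.2 -> v.1 = pre ++ A :: l.1 ->
  exists2 w, valid_vertex m w & parent w = Some l.
Proof.
move=> L V r vE; have k_le : size pre <= size v.1 by rewrite vE size_cat leq_addr.
have [[s q] E] := ancestor_exists V k_le; exists (s, q).
  by have [] := ancestorP V E.
have [_ /= sE wr W] := ancestorP V E; rewrite vE drop_size_cat // in sE; subst s.
have P := valid_parent W; rewrite /parent /=.
case: l L r W P wr {E vE} => s p /= L r W P wr.
by rewrite (root_pos_inj P L (etrans wr r)).
Qed.

Lemma diverging_stages_separated l v c A B s t :
  valid_vertex m l -> valid_vertex m v -> root_pos v.1 v.2 = root_pos l.1 l.2 ->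
  rev v.1 = c ++ A :: s -> rev l.1 = c ++ B :: t -> A != B ->
  xcoord l < xcoord v \/ ycoord l < ycoord v.
Proof.
move=> L V r vE lE AB.
have bounded_in u C rest :
    valid_vertex m u -> rev u.1 = c ++ C :: rest -> bounded_subset C.
  move=> U uE; move: (valid_stage_bounded (valid_vertex_stage U)).
  by rewrite -all_rev uE all_cat => /and3P[].
have A_ok := bounded_in _ _ _ V vE; have B_ok := bounded_in _ _ _ L lE.
have [lt|gt|eq] := ltngtP (label A) (label B).
- left; apply: (xcoord_ltn_lex (c := root_pos l.1 l.2 :: map colabel c)) L V _ _ _.
  + by rewrite /xdigits lE map_cat.
  + by rewrite /xdigits r vE map_cat.
  + by move: (label_bounds A_ok) (label_bounds B_ok) lt; rewrite /colabel; lia.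
- right; apply: ycoord_ltn => //.
  by apply: (stage_key_ltn_lex (c := map label c)) gt;
    rewrite ?valid_vertex_stage // ?lE ?vE map_cat.
- by move: AB; rewrite (subset_code_inj A_ok B_ok (succn_inj eq)) eqxx.
Qed.

Lemma window_ancestor l v : valid_vertex m l -> valid_vertex m v ->
  (forall w, valid_vertex m w -> parent w <> Some l) ->
  xcoord ([::], root_pos l.1 l.2) <= xcoord v -> xcoord v <= xcoord l ->
  ycoord v <= ycoord l ->
  exists k, ancestor k l = Some v.
Proof.
move=> L V leaf lo hi y_le; have r := window_root_pos L V lo hi.
have prefix_anc u : rev l.1 = rev v.1 ++ u -> exists k, ancestor k l = Some v.
  move=> lE; have {}lE : l.1 = rev u ++ v.1 by rewrite -[l.1]revK lE rev_cat revK.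
  exists (size (rev u)); apply: ancestor_drop => //; rewrite lE ?size_cat ?leq_addr //.
  by rewrite drop_size_cat.
case: (seq_prefix_or_diverge (rev v.1) (rev l.1)) =>
    [E|[A [u E]]|[A [u E]]|[c [A [B [s [t [AB vE lE]]]]]]].
- by apply: (prefix_anc [::]); rewrite cats0 E.
- exact: prefix_anc E.
- have vE : v.1 = rev u ++ A :: l.1.
    by rewrite -[v.1]revK E rev_cat revK rev_cons cat_rcons.
  by have [w W] := stage_extension_has_child L V r vE; move/leaf: W.
- by case: (diverging_stages_separated L V r vE lE AB); lia.
Qed.

Definition embed (v : vertex m) : point := (INR (xcoord (val v)), INR (ycoord (val v))).

Lemma embed_inj : injective embed.
Proof. by move=> v w [_ /INR_eq yE]; apply/val_inj/(ycoord_inj (valP v) (valP w) yE). Qed.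

Lemma stage_hyperedge_cut_out E : stage_hyperedge E -> cuts_out embed E.
Proof.
case=> As [k [VA [km HE]]]; set lo := stage_key As * nroots.+1 + k.
apply: (@cuts_out_preimage _ _ _ (in_hstrip (INR lo) (Rminus (INR (lo + m)) 1))).
  by right; exists (INR lo), (Rminus (INR (lo + m)) 1).
by move=> v; rewrite HE in_hstrip_INR (ycoord_stage_window VA km (valP v)).
Qed.

Lemma path_hyperedge_cut_out E : path_hyperedge E -> cuts_out embed E.
Proof.
case=> l [leaf HE]; have L := valP l; set r := root_pos (val l).1 (val l).2.
apply: (@cuts_out_preimage _ _ _
  (in_bottomless (INR (xcoord ([::], r))) (INR (xcoord (val l))) (INR (ycoord (val l))))).
  by left; exists (INR (xcoord ([::], r))), (INR (xcoord (val l))), (INR (ycoord (val l))).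
move=> v; rewrite HE in_bottomless_INR; split.
- case=> lo hi y_le; apply: window_ancestor lo hi y_le => //; first exact: valP.
  by move=> w W wl; apply: leaf; exists (exist _ w W).
- by case=> k /(ancestor_in_window L) [].
Qed.

End Realization.

Theorem theorem10 :
  forall m : nat,
    exists pi : vertex m -> point,
      injective pi /\
      forall E : vertex m -> Prop, hyperedge E ->
        exists Rg : point -> Prop,
          is_BL_or_HS_range Rg /\
          (* pi(V) ∩ Rg = pi(E) *)
          forall q : point,
            ((exists v : vertex m, pi v = q) /\ Rg q) <->
            (exists v : vertex m, E v /\ pi v = q).
Proof.
move=> m; exists (@embed m); split; first exact: embed_inj.
by move=> E [/stage_hyperedge_cut_out | /path_hyperedge_cut_out].
Qed.
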